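(* Let all rate functions below be monotone chemical. Consider: (MII) the network with reactions $1:\ \mathrm{NI}_1+\mathrm{NE}_1+\mathrm{D}_2\to\mathrm{NI}_1+\mathrm{NE}_2+\mathrm{D}_2$ and $2:\ \mathrm{NI}_2+\mathrm{NE}_2+\mathrm{D}_1\to\mathrm{NI}_2+\mathrm{NE}_1+\mathrm{D}_1$, with ODEs \[ [\dot{\mathrm{NE}}_1]=-r_1([\mathrm{NI}_1],[\mathrm{NE}_1],[\mathrm{D}_2])+r_2([\mathrm{NI}_2],[\mathrm{NE}_2],[\mathrm{D}_1]),\quad [\dot{\mathrm{NE}}_2]=-[\dot{\mathrm{NE}}_1],\quad [\dot{\mathrm{NI}}_1]=[\dot{\mathrm{NI}}_2]=[\dot{\mathrm D}_1]=[\dot{\mathrm D}_2]=0; \] (MIV) the network with reactions $1:\ 2\Lambda_1+\mathrm{D}_2\to\Lambda_1+\Lambda_2+\mathrm{D}_2$ and $2:\ 2\Lambda_2+\mathrm{D}_1\to\Lambda_2+\Lambda_1+\mathrm{D}_1$, with ODEs \[ [\dot\Lambda_1]=-r_1([\Lambda_1],[\mathrm{D}_2])+r_2([\Lambda_2],[\mathrm{D}_1]),\quad [\dot\Lambda_2]=-[\dot\Lambda_1],\quad [\dot{\mathrm D}_1]=[\dot{\mathrm D}_2]=0; \] (MV) the network with reactions $1:\ \Lambda_1+\mathrm{NE}_1+\Lambda_2\to\Lambda_1+\mathrm{NE}_2+\Lambda_2$ and $2:\ \Lambda_2+\mathrm{NE}_2+\Lambda_1\to\Lambda_2+\mathrm{NE}_1+\Lambda_1$,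 with ODEs \[ [\dot{\mathrm{NE}}_1]=-r_1([\Lambda_1],[\mathrm{NE}_1],[\Lambda_2])+r_2([\Lambda_2],[\mathrm{NE}_2],[\Lambda_1]),\quad [\dot{\mathrm{NE}}_2]=-[\dot{\mathrm{NE}}_1],\quad [\dot\Lambda_1]=[\dot\Lambda_2]=0. \] Then each of these three systems admits only one single steady state in each invariant set obtained by fixing the constant species and the conserved sum ($[\mathrm{NE}_1]+[\mathrm{NE}_2]$, resp. $[\Lambda_1]+[\Lambda_2]$), for all choices of monotone reaction functions $r_1,r_2$, and thus none of them has the capacity for differentiation.
   Context: A rate function $r_j$ is monotone chemical if it is nonnegative, positive exactly when all its reactant concentrations are positive, independent of non-reactant concentrations, and has positive partial derivative with respect to each reactant concentration at positive concentrations. Capacity for differentiation means the existence of a homogeneous positive steady state (concentrations of species with indices 1 and 2 equal, under identical rate functions for the two symmetric reactions) at which, for some admissible positive values of the partial derivatives of the rates, the Jacobian restricted to the invariant set is singular, enabling a zero-eigenvalue bifurcation to inhomogeneous steady states. *)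

From Stdlib Require Import Reals.
From Coquelicot Require Import Coquelicot.
Open Scope R_scope.

(** Monotone chemical rate functions.  A rate function only takes the
    concentrations of its reactants as arguments (so it is independent of
    non-reactant concentrations by construction). *)
Definition mono_chem2 (f : R -> R -> R) : Prop :=
  (forall x y, 0 <= x -> 0 <= y -> 0 <= f x y) /\
  (forall x y, 0 <= x -> 0 <= y -> (0 < f x y <-> 0 < x /\ 0 < y)) /\
  (forall x y, 0 < x -> 0 < y ->
     (exists d, 0 < d /\ is_derive (fun t => f t y) x d) /\
     (exists d, 0 < d /\ is_derive (fun t => f x t) y d)).

Definition mono_chem3 (f : R -> R -> R -> R) : Prop :=
  (forall x y z, 0 <= x -> 0 <= y -> 0 <= z -> 0 <= f x y z) /\
  (forall x y z, 0 <= x -> 0 <= y -> 0 <= z ->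
     (0 < f x y z <-> 0 < x /\ 0 < y /\ 0 < z)) /\
  (forall x y z, 0 < x -> 0 < y -> 0 < z ->
     (exists d, 0 < d /\ is_derive (fun t => f t y z) x d) /\
     (exists d, 0 < d /\ is_derive (fun t => f x t z) y d) /\
     (exists d, 0 < d /\ is_derive (fun t => f x y t) z d)).

Definition nonneg {S : Type} (c : S -> R) : Prop := forall s, 0 <= c s.
Definition positive {S : Type} (c : S -> R) : Prop := forall s, 0 < c s.
Definition steady {S : Type} (F : (S -> R) -> S -> R) (c : S -> R) : Prop :=
  forall s, F c s = 0.

(** Uniqueness of (nonnegative) steady states in each invariant set:
    [inv c c'] says c and c' lie in the same invariant set, [adm c]
    says the constant species of the invariant set have positive value. *)
Definition unique_ss {S : Type} (F : (S -> R) -> S -> R)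
  (inv : (S -> R) -> (S -> R) -> Prop) (adm : (S -> R) -> Prop) : Prop :=
  forall c c', nonneg c -> nonneg c' -> adm c -> inv c c' ->
    steady F c -> steady F c' -> forall s, c s = c' s.

(** The invariant set through c is the line
    c + t v (t real), so the restricted Jacobian is singular iff J v = 0,
    i.e. the derivative of t |-> F (c + t v) at t = 0 vanishes. *)
Definition capacity {S RT : Type} (mono : RT -> Prop)
  (F : RT -> RT -> (S -> R) -> S -> R) (homog : (S -> R) -> Prop)
  (v : S -> R) : Prop :=
  exists r : RT, mono r /\ exists c : S -> R,
    positive c /\ homog c /\ steady (F r r) c /\
    forall s, is_derive (fun t => F r r (fun s' => c s' + t * v s') s) 0 0.

Inductive spII := NI1 | NE1 | D2 | NI2 | NE2 | D1.

Definition FII (r1 r2 : R -> R -> R -> R) (c : spII -> R) (s : spII) : R :=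
  match s with
  | NE1 => - r1 (c NI1) (c NE1) (c D2) + r2 (c NI2) (c NE2) (c D1)
  | NE2 => r1 (c NI1) (c NE1) (c D2) - r2 (c NI2) (c NE2) (c D1)
  | _ => 0
  end.

Definition invII (c c' : spII -> R) : Prop :=
  c NI1 = c' NI1 /\ c NI2 = c' NI2 /\ c D1 = c' D1 /\ c D2 = c' D2 /\
  c NE1 + c NE2 = c' NE1 + c' NE2.

Definition admII (c : spII -> R) : Prop :=
  0 < c NI1 /\ 0 < c NI2 /\ 0 < c D1 /\ 0 < c D2.

Definition homII (c : spII -> R) : Prop :=
  c NI1 = c NI2 /\ c NE1 = c NE2 /\ c D1 = c D2.

Definition vII (s : spII) : R :=
  match s with NE1 => 1 | NE2 => -1 | _ => 0 end.

Inductive spIV := L1 | L2 | E1 | E2.  (* Lambda_1, Lambda_2, D_1, D_2 *)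

Definition FIV (r1 r2 : R -> R -> R) (c : spIV -> R) (s : spIV) : R :=
  match s with
  | L1 => - r1 (c L1) (c E2) + r2 (c L2) (c E1)
  | L2 => r1 (c L1) (c E2) - r2 (c L2) (c E1)
  | _ => 0
  end.

Definition invIV (c c' : spIV -> R) : Prop :=
  c E1 = c' E1 /\ c E2 = c' E2 /\ c L1 + c L2 = c' L1 + c' L2.

Definition admIV (c : spIV -> R) : Prop := 0 < c E1 /\ 0 < c E2.

Definition homIV (c : spIV -> R) : Prop := c L1 = c L2 /\ c E1 = c E2.

Definition vIV (s : spIV) : R :=
  match s with L1 => 1 | L2 => -1 | _ => 0 end.

Inductive spV := V_L1 | V_NE1 | V_L2 | V_NE2.

Definition FV (r1 r2 : R -> R -> R -> R) (c : spV -> R) (s : spV) : R :=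
  match s with
  | V_NE1 => - r1 (c V_L1) (c V_NE1) (c V_L2) + r2 (c V_L2) (c V_NE2) (c V_L1)
  | V_NE2 => r1 (c V_L1) (c V_NE1) (c V_L2) - r2 (c V_L2) (c V_NE2) (c V_L1)
  | _ => 0
  end.

Definition invV (c c' : spV -> R) : Prop :=
  c V_L1 = c' V_L1 /\ c V_L2 = c' V_L2 /\
  c V_NE1 + c V_NE2 = c' V_NE1 + c' V_NE2.

Definition admV (c : spV -> R) : Prop := 0 < c V_L1 /\ 0 < c V_L2.

Definition homV (c : spV -> R) : Prop := c V_L1 = c V_L2 /\ c V_NE1 = c V_NE2.

Definition vV (s : spV) : R :=
  match s with V_NE1 => 1 | V_NE2 => -1 | _ => 0 end.

(** Each of the three networks is a single exchange [X1 <-> X2] catalysed by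
    species that stay constant.  Once those are fixed, both rates are
    strictly increasing in the exchanged concentration (zero at zero,
    positive derivative after), so on the conserved line [x1 + x2 = T] the
    net flux [r1 x1 - r2 (T - x1)] is strictly increasing in [x1] and
    vanishes at most once.  With a single rate [r] at a homogeneous state,
    moving along [(1, -1)] changes the flux at rate [-2 * dr/dx < 0], so the
    restricted Jacobian is never singular. *)

From Stdlib Require Import Reals Lra.
From Coquelicot Require Import Coquelicot.
Open Scope R_scope.

Definition increasing_on_nonneg (f : R -> R) : Prop :=
  forall x y, 0 <= x -> x < y -> f x < f y.

Lemma increasing_on_nonneg_derive (f : R -> R) :
  f 0 = 0 -> (forall x, 0 < x -> 0 < f x) ->
  (forall x, 0 < x -> exists d, 0 < d /\ is_derive f x d) ->
  increasing_on_nonneg f.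
Proof.
  intros f0 fpos fder x y Hx Hxy.
  destruct (Req_dec x 0) as [->|Hx0].
  { rewrite f0. apply fpos. lra. }
  apply (incr_function f 0 p_infty (Derive f)); simpl; try lra.
  - intros t Ht _. destruct (fder t Ht) as [d [_ Hd]].
    rewrite (is_derive_unique _ _ _ Hd). exact Hd.
  - intros t Ht _. destruct (fder t Ht) as [d [Hpos Hd]].
    rewrite (is_derive_unique _ _ _ Hd). exact Hpos.
Qed.

Lemma mono_chem3_increasing_mid (r : R -> R -> R -> R) a b :
  mono_chem3 r -> 0 < a -> 0 < b -> increasing_on_nonneg (fun t => r a t b).
Proof.
  intros [rnn [rpos rder]] Ha Hb. apply increasing_on_nonneg_derive.
  - assert (~ 0 < r a 0 b) by (rewrite rpos; lra).
    pose proof (rnn a 0 b). lra.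
  - intros x Hx. apply rpos; lra.
  - intros x Hx. apply (rder a x b Ha Hx Hb).
Qed.

Lemma mono_chem2_increasing_fst (r : R -> R -> R) b :
  mono_chem2 r -> 0 < b -> increasing_on_nonneg (fun t => r t b).
Proof.
  intros [rnn [rpos rder]] Hb. apply increasing_on_nonneg_derive.
  - assert (~ 0 < r 0 b) by (rewrite rpos; lra).
    pose proof (rnn 0 b). lra.
  - intros x Hx. apply rpos; lra.
  - intros x Hx. apply (rder x b Hx Hb).
Qed.

Lemma balance_on_line_unique (f g : R -> R) x y x' y' :
  increasing_on_nonneg f -> increasing_on_nonneg g ->
  0 <= x -> 0 <= y -> 0 <= x' -> 0 <= y' -> x + y = x' + y' ->
  f x = g y -> f x' = g y' -> x = x' /\ y = y'.
Proof.
  intros finc ginc Hx Hy Hx' Hy' Hsum E E'.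
  destruct (Rtotal_order x x') as [Hlt|[Heq|Hgt]].
  - assert (f x < f x') by (apply finc; lra).
    assert (g y' < g y) by (apply ginc; lra). lra.
  - lra.
  - assert (f x' < f x) by (apply finc; lra).
    assert (g y < g y') by (apply ginc; lra). lra.
Qed.

Lemma is_derive_antisym_shift (f : R -> R) x d :
  is_derive f x d -> is_derive (fun t => - f (x + t) + f (x - t)) 0 (- 2 * d).
Proof.
  intros Hf.
  assert (Hplus : is_derive (fun t => f (x + t)) 0 d).
  { assert (Hlin : is_derive (fun t => x + t) 0 1) by (auto_derive; [auto | ring]).
    assert (Hf0 : is_derive f (x + 0) d) by now rewrite Rplus_0_r.
    pose proof (is_derive_comp f _ 0 d 1 Hf0 Hlin) as H.
    change (scal 1 d) with (1 * d) in H. now rewrite Rmult_1_l in H. }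
  assert (Hminus : is_derive (fun t => f (x - t)) 0 (- d)).
  { assert (Hlin : is_derive (fun t => x - t) 0 (-1)) by (auto_derive; [auto | ring]).
    assert (Hf0 : is_derive f (x - 0) d) by now rewrite Rminus_0_r.
    pose proof (is_derive_comp f _ 0 d (-1) Hf0 Hlin) as H.
    change (scal (-1) d) with (-1 * d) in H. now replace (- d) with (-1 * d) by ring. }
  replace (- 2 * d) with (- d + - d) by ring.
  apply (is_derive_plus (fun t => - f (x + t))); [|exact Hminus].
  exact (is_derive_opp (fun t => f (x + t)) 0 d Hplus).
Qed.

Lemma exchange_flux_nondegenerate (f g : R -> R) x d :
  is_derive f x d -> 0 < d ->
  (forall t, g t = - f (x + t) + f (x - t)) -> ~ is_derive g 0 0.
Proof.
  intros Hf Hd Hg Hg0.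
  assert (Hg2 : is_derive g 0 (- 2 * d)).
  { apply (is_derive_ext (fun t => - f (x + t) + f (x - t))).
    - intro t. symmetry. apply Hg.
    - now apply is_derive_antisym_shift. }
  apply is_derive_unique in Hg0. apply is_derive_unique in Hg2. lra.
Qed.

Lemma unique_ss_II r1 r2 :
  mono_chem3 r1 -> mono_chem3 r2 -> unique_ss (FII r1 r2) invII admII.
Proof.
  intros m1 m2 c c' n n' [a1 [a2 [a3 a4]]] [i1 [i2 [i3 [i4 i5]]]] s s'.
  pose proof (s NE1) as S. pose proof (s' NE1) as S'. simpl in S, S'.
  rewrite <- i1, <- i2, <- i3, <- i4 in S'.
  destruct (balance_on_line_unique _ _ (c NE1) (c NE2) (c' NE1) (c' NE2)
    (mono_chem3_increasing_mid r1 _ _ m1 a1 a4)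
    (mono_chem3_increasing_mid r2 _ _ m2 a2 a3)) as [e1 e2]; auto; try lra.
  intros []; auto.
Qed.

Lemma no_capacity_II : ~ capacity mono_chem3 FII homII vII.
Proof.
  intros [r [[_ [_ rder]] [c [cpos [[h1 [h2 h3]] [_ D]]]]]].
  destruct (rder (c NI1) (c NE1) (c D2) (cpos _) (cpos _) (cpos _))
    as [_ [[d [Hd Hder]] _]].
  apply (exchange_flux_nondegenerate _ _ _ _ Hder Hd) with (2 := D NE1).
  intro t. simpl. rewrite h1, h3, <- h2, !Rmult_0_r, !Rplus_0_r, Rmult_1_r.
  now replace (t * -1) with (- t) by ring.
Qed.

Lemma unique_ss_IV r1 r2 :
  mono_chem2 r1 -> mono_chem2 r2 -> unique_ss (FIV r1 r2) invIV admIV.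
Proof.
  intros m1 m2 c c' n n' [a1 a2] [i1 [i2 i3]] s s'.
  pose proof (s L1) as S. pose proof (s' L1) as S'. simpl in S, S'.
  rewrite <- i1, <- i2 in S'.
  destruct (balance_on_line_unique _ _ (c L1) (c L2) (c' L1) (c' L2)
    (mono_chem2_increasing_fst r1 _ m1 a2)
    (mono_chem2_increasing_fst r2 _ m2 a1)) as [e1 e2]; auto; try lra.
  intros []; auto.
Qed.

Lemma no_capacity_IV : ~ capacity mono_chem2 FIV homIV vIV.
Proof.
  intros [r [[_ [_ rder]] [c [cpos [[h1 h2] [_ D]]]]]].
  destruct (rder (c L1) (c E2) (cpos _) (cpos _)) as [[d [Hd Hder]] _].
  apply (exchange_flux_nondegenerate _ _ _ _ Hder Hd) with (2 := D L1).
  intro t. simpl. rewrite h2, <- h1, !Rmult_0_r, !Rplus_0_r, Rmult_1_r.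
  now replace (t * -1) with (- t) by ring.
Qed.

Lemma unique_ss_V r1 r2 :
  mono_chem3 r1 -> mono_chem3 r2 -> unique_ss (FV r1 r2) invV admV.
Proof.
  intros m1 m2 c c' n n' [a1 a2] [i1 [i2 i3]] s s'.
  pose proof (s V_NE1) as S. pose proof (s' V_NE1) as S'. simpl in S, S'.
  rewrite <- i1, <- i2 in S'.
  destruct (balance_on_line_unique _ _ (c V_NE1) (c V_NE2) (c' V_NE1) (c' V_NE2)
    (mono_chem3_increasing_mid r1 _ _ m1 a1 a2)
    (mono_chem3_increasing_mid r2 _ _ m2 a2 a1)) as [e1 e2]; auto; try lra.
  intros []; auto.
Qed.

Lemma no_capacity_V : ~ capacity mono_chem3 FV homV vV.
Proof.
  intros [r [[_ [_ rder]] [c [cpos [[h1 h2] [_ D]]]]]].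
  destruct (rder (c V_L1) (c V_NE1) (c V_L2) (cpos _) (cpos _) (cpos _))
    as [_ [[d [Hd Hder]] _]].
  apply (exchange_flux_nondegenerate _ _ _ _ Hder Hd) with (2 := D V_NE1).
  intro t. simpl. rewrite <- h1, <- h2, !Rmult_0_r, !Rplus_0_r, Rmult_1_r.
  now replace (t * -1) with (- t) by ring.
Qed.

Theorem proposition4p2 :
  ((forall r1 r2, mono_chem3 r1 -> mono_chem3 r2 -> unique_ss (FII r1 r2) invII admII)
   /\ ~ capacity mono_chem3 FII homII vII) /\
  ((forall r1 r2, mono_chem2 r1 -> mono_chem2 r2 -> unique_ss (FIV r1 r2) invIV admIV)
   /\ ~ capacity mono_chem2 FIV homIV vIV) /\
  ((forall r1 r2, mono_chem3 r1 -> mono_chem3 r2 -> unique_ss (FV r1 r2) invV admV)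
   /\ ~ capacity mono_chem3 FV homV vV).
Proof.
  split; [split | split; split].
  - exact unique_ss_II.
  - exact no_capacity_II.
  - exact unique_ss_IV.
  - exact no_capacity_IV.
  - exact unique_ss_V.
  - exact no_capacity_V.
Qed.
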